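(* Let $\Sigma=(\mathbb{N}_0,X,U,\mathscr{U},\phi)$ be a control system as in the standing setup and let $Q\subset X$ be a nonempty compact set. Then $Q$ is finitely equi-invariant if and only if $Q$ has bounded invariance complexity.
   Context: Standing setup: $(X,d)$ is a metric space, $U$ is a compact metric space, and $F:X\times U\to X$ is a map such that $F_u:=F(\cdot,u)$ is continuous for every $u\in U$. Let $\mathscr U=U^{\mathbb N_0}$ with the product topology. For $\omega=(\omega_0,\omega_1,\dots)\in\mathscr U$, $x\in X$, set $\phi(0,x,\omega)=x$ and $\phi(k,x,\omega)=F_{\omega_{k-1}}\circ\cdots\circ F_{\omega_0}(x)$ for $k\ge1$. It is assumed that $\phi:\mathbb N_0\times X\times\mathscr U\to X$ is continuous. Notation: $\mathbb N=\{1,2,\dots\}$, $\mathbb N_0=\{0,1,2,\dots\}$; $B(x,\delta)$ is the open ball; $d(y,Q)=\inf_{q\in Q}d(y,q)$; $B_\varepsilon(Q)=\{y\in X:d(y,Q)<\varepsilon\}$; for $A\subset\mathbb N_0$, $\phi(A,x,\omega)=\{\phi(k,x,\omega):k\in A\}$. Finite equi-invariance: a point $x\in Q$ is a finitely equi-invariant point of $Q$ if for every $\varepsilon>0$ there exist $\delta>0$ and a finite set $F\subset\mathscr U$ such that for every $y\in B(x,\delta)\cap Q$ there is $\omega\in F$ with $\phi(\mathbb N_0,y,\omega)\subset B_\varepsilon(Q)$. $Q$ is finitely equi-invariant if every point of $Q$ is a finitely equi-invariant point of $Q$. Invariance complexity: for $\omega\in\mathscr U$, $n\in\mathbb N$,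 $\varepsilon>0$ let $Q^\varepsilon_{n,\omega}=\{x\in Q:\phi(\{0,1,\dots,n-1\},x,\omega)\subset B_\varepsilon(Q)\}$. A set $F\subset\mathscr U$ is $(n,\varepsilon,Q)$-spanning if $Q=\bigcup_{\omega\in F}Q^\varepsilon_{n,\omega}$, and $r_{inv}(n,\varepsilon,Q)$ is the minimal cardinality of an $(n,\varepsilon,Q)$-spanning set ($=\infty$ if none exists). $Q$ has bounded invariance complexity if for every $\varepsilon>0$ there is $C>0$ with $r_{inv}(n,\varepsilon,Q)\le C$ for all $n\in\mathbb N$. *)

From HB Require Import structures.
From mathcomp Require Import all_boot all_order all_algebra.
From mathcomp Require Import all_classical all_reals all_analysis.
Set Implicit Arguments. Unset Strict Implicit. Unset Printing Implicit Defensive.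
Import Order.TTheory GRing.Theory Num.Theory.
Local Open Scope classical_set_scope.
Local Open Scope ring_scope.

Section ControlSystem.
Context {R : realType} {X U : metricType R}.

Fixpoint phi (F : X -> U -> X) (k : nat) (x : X) (w : nat -> U) : X :=
  match k with
  | O => x
  | S k' => F (phi F k' x w) (w k')
  end.

(* B_eps(Q) = {y | d(y,Q) < eps}; d(y,Q) < eps iff some q in Q has d(y,q) < eps *)
Definition Beps (eps : R) (Q : set X) : set X :=
  [set y | exists2 q, Q q & mdist y q < eps].

Definition fin_equi_inv_point (F : X -> U -> X) (Q : set X) (x : X) : Prop :=
  Q x /\
  forall eps : R, 0 < eps ->
  exists delta : R, 0 < delta /\
  exists Fs : set (nat -> U), finite_set Fs /\
  forall y : X, mdist x y < delta -> Q y ->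
    exists2 w, Fs w & forall k : nat, Beps eps Q (phi F k y w).

Definition fin_equi_inv (F : X -> U -> X) (Q : set X) : Prop :=
  forall x, Q x -> fin_equi_inv_point F Q x.

Definition Qnw (F : X -> U -> X) (Q : set X) (n : nat) (eps : R) (w : nat -> U)
  : set X :=
  [set x | Q x /\ forall k : nat, (k < n)%N -> Beps eps Q (phi F k x w)].

Definition spanning (F : X -> U -> X) (n : nat) (eps : R) (Q : set X)
  (S : set (nat -> U)) : Prop :=
  Q = \bigcup_(w in S) Qnw F Q n eps w.

(* r_inv(n,eps,Q) <= C  iff  some (n,eps,Q)-spanning set has at most C elements *)
Definition rinv_le (F : X -> U -> X) (n : nat) (eps : R) (Q : set X) (C : nat)
  : Prop :=
  exists S : set (nat -> U), spanning F n eps Q S /\ (S #<= `I_C)%card.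

Definition bounded_inv_complexity (F : X -> U -> X) (Q : set X) : Prop :=
  forall eps : R, 0 < eps ->
  exists C : nat, forall n : nat, (0 < n)%N -> rinv_le F n eps Q C.

End ControlSystem.

From HB Require Import structures.
From mathcomp Require Import all_boot all_order all_algebra.
From mathcomp Require Import all_classical all_reals all_analysis.
Import Order.TTheory GRing.Theory Num.Theory.
Local Open Scope classical_set_scope.
Local Open Scope ring_scope.

(* (->) Compactness of Q turns the local finite families of controls given
   by finite equi-invariance into one finite family S that keeps every
   trajectory from Q in B_eps(Q) forever; S is then (n,eps,Q)-spanning for
   every n, so r_inv(n,eps,Q) <= #S.
   (<-) Index each (n,eps/2,Q)-spanning set by a C-tuple of controls.  The
   C-tuples spanning up to time n (with closed target closure B_{eps/2}(Q))
   form a decreasing sequence of nonempty closed sets in the compact product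
   space of tuples of controls (Tychonoff), so one tuple W works up to every
   time n.  A pigeonhole argument then gives, for each y in Q, one index i
   such that W i keeps y in closure B_{eps/2}(Q), inside B_eps(Q), forever.
   Hence the finite family {W i | i < C} witnesses finite equi-invariance,
   even with a delta independent of the point. *)

Lemma antitone_common_witness (C : nat) (P : nat -> nat -> Prop) :
  (forall n m i, (n <= m)%N -> P m i -> P n i) ->
  (forall n, exists2 i, (i < C)%N & P n i) ->
  exists2 i, (i < C)%N & forall n, P n i.
Proof.
move=> Panti HP; apply: contrapT => /forall2NP noCommon.
have fails (i : 'I_C) : exists n, ~ P n i.
  by case: (noCommon i) => // /existsNP.
have [N HN] := choice fails.
have [i iC Pi] := HP (\max_(j < C) N j).
apply: (HN (Ordinal iC)); apply: Panti Pi.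
exact: (@leq_bigmax_cond _ _ (fun j : 'I_C => N j) (Ordinal iC)).
Qed.

Lemma compact_antitone_closed (T : topologicalType) (A : nat -> set T) :
  compact [set: T] -> (forall n, closed (A n)) ->
  (forall n m, (n <= m)%N -> A m `<=` A n) -> (forall n, A n !=set0) ->
  exists t, forall n, A n t.
Proof.
move=> cT Acl Aanti Ane.
pose G := filter_from [set: nat] A.
have Gfilter : ProperFilter G.
  apply: filter_from_proper => [|n _]; last exact: Ane.
  apply: filter_from_filter => [|i j _ _]; first by exists 0%N.
  exists (maxn i j) => // t Ajt.
  by split; apply: (Aanti _ (maxn i j)) => //; rewrite ?leq_maxl ?leq_maxr.
have [t [_ tclG]] := cT G Gfilter filterT.
exists t => n; rewrite (closure_id (A n)).1 //.
by rewrite clusterE in tclG; apply: tclG; exists n.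
Qed.

Lemma compact_sequences (T : topologicalType) :
  compact [set: T] -> compact [set: {ptws nat -> T}].
Proof.
move=> cT; have := @tychonoff nat (fun _ => T) (fun _ => setT) (fun _ => cT).
by congr compact; apply/seteqP; split.
Qed.

(* The filter on families of a type generated by all supersets of finite
   families: "eventually" in it means "for all large enough finite families". *)
Definition finite_supersets (T : Type) : set_system (set T) :=
  filter_from finite_set (fun S0 => [set S | S0 `<=` S]).

Lemma finite_supersets_filter (T : Type) : Filter (@finite_supersets T).
Proof.
apply: filter_from_filter; first by exists set0.
move=> S1 S2 fS1 fS2; exists (S1 `|` S2); first by rewrite finite_setU.
by move=> S S12S; split=> w Sw; apply: S12S; [left|right].
Qed.

Lemma closure_Beps_half (R : realType) (X : metricType R) (eps : R)
    (Q : set X) :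
  0 < eps -> closure (Beps (eps / 2) Q) `<=` Beps eps Q.
Proof.
move=> eps0 z.
have eps20 : 0 < eps / 2 by rewrite divr_gt0.
move=> /(_ (ball z (eps / 2)) (nbhsx_ballx z _ eps20)) [z' [[q Qq qz'] zz']].
exists q => //; rewrite ballEmdist /= in zz'.
rewrite (splitr eps); apply: le_lt_trans (metric_triangle z z' q) _.
by rewrite ltrD.
Qed.

Section ControlSystem.
Context {R : realType} {X U : metricType R} (F : X -> U -> X) (Q : set X).

Definition steers_until (A : set X) (n : nat) (y : X) (w : nat -> U) : Prop :=
  forall k, (k < n)%N -> A (phi F k y w).

(* The C-tuple of controls W steers every point of Q inside A up to time n:
   the tuple form of an (n,A)-spanning set of cardinality at most C. *)
Definition tuple_spans (A : set X) (C n : nat) (W : nat -> nat -> U) : Prop :=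
  forall y, Q y -> exists2 i, (i < C)%N & steers_until A n y (W i).

Lemma tuple_spans_antitone {A : set X} {C n m : nat} {W : nat -> nat -> U} :
  (n <= m)%N -> tuple_spans A C m W -> tuple_spans A C n W.
Proof.
move=> nm HW y Qy; have [i iC Hi] := HW y Qy; exists i => // k kn.
exact/Hi/(leq_trans kn nm).
Qed.

Lemma tuple_spans_sub {A B : set X} {C n : nat} {W : nat -> nat -> U} :
  A `<=` B -> tuple_spans A C n W -> tuple_spans B C n W.
Proof.
move=> AB HW y Qy; have [i iC Hi] := HW y Qy.
by exists i => // k kn; apply/AB/Hi.
Qed.

Lemma tuple_spans_forever {A : set X} {C : nat} {W : nat -> nat -> U} :
  (forall n, tuple_spans A C n W) ->
  forall y, Q y -> exists2 i, (i < C)%N & forall k, A (phi F k y (W i)).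
Proof.
move=> HW y Qy.
have [i iC Hi] := @antitone_common_witness C
  (fun n i => steers_until A n y (W i))
  (fun n m i nm Hm k kn => Hm k (leq_trans kn nm)) (fun n => HW n y Qy).
by exists i => // k; exact: (Hi k.+1 k).
Qed.

(* An (n,eps,Q)-spanning set of cardinality at most C can be listed as a
   C-tuple of controls (Q is nonempty, which provides a default control). *)
Lemma rinv_le_tuple_spans {n C : nat} {eps : R} :
  Q !=set0 -> rinv_le F n eps Q C ->
  exists W, tuple_spans (Beps eps Q) C n W.
Proof.
move=> [y0 Qy0] [S [Sspan /ocard_geP/surjPex [f fsurj]]].
have [w0 Sw0 _] : (\bigcup_(w in S) Qnw F Q n eps w) y0 by rewrite -Sspan.
exists (fun i => odflt w0 (f i)) => y Qy.
have [w Sw [_ Hw]] : (\bigcup_(w in S) Qnw F Q n eps w) y by rewrite -Sspan.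
have [i iC fi] := fsurj (Some w) (ex_intro2 _ _ w Sw erefl).
by exists i => //; rewrite fi.
Qed.

Lemma forever_spanning (eps : R) (S : set (nat -> U)) (n : nat) :
  (forall y, Q y -> exists2 w, S w & forall k, Beps eps Q (phi F k y w)) ->
  spanning F n eps Q S.
Proof.
move=> HS; apply/seteqP; split=> [y Qy|y [w _ []] //].
by have [w Sw Hw] := HS y Qy; exists w => //; split.
Qed.

Section CompactQ.
Hypothesis cQ : compact Q.

(* Compactness of Q glues the local finite families of controls given by
   finite equi-invariance into one finite family working on all of Q. *)
Lemma fin_equi_inv_finite_controls {eps : R} : 0 < eps ->
  fin_equi_inv F Q -> exists2 S : set (nat -> U), finite_set S &
  forall y, Q y -> exists2 w, S w & forall k, Beps eps Q (phi F k y w).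
Proof.
move=> eps0 hfe.
pose steers S y := exists2 w : nat -> U, S w & forall k, Beps eps Q (phi F k y w).
suff [S0 fS0 /(_ S0 (@subset_refl _ _)) QS0] :
    finite_supersets (nat -> U) (fun S => Q `<=` steers S) by exists S0.
have := (near_covering_withinP Q).2 ((compact_near_coveringP Q).1 cQ) _ _ steers
  (@finite_supersets_filter _); apply=> x Qx.
have [_ /(_ eps eps0) [d [d0 [Fs [fFs HFs]]]]] := hfe x Qx.
exists (ball x d, [set S | Fs `<=` S]).
  by split; [exact: nbhsx_ballx | exists Fs].
move=> [y S] [/= + FsS] Qy; rewrite ballEmdist /= => xy.
by have [w Fsw Hw] := HFs y xy Qy; exists w => //; exact: FsS.
Qed.

Theorem fin_equi_inv_bounded_complexity :
  fin_equi_inv F Q -> bounded_inv_complexity F Q.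
Proof.
move=> hfe eps eps0.
have [S fS HS] := fin_equi_inv_finite_controls eps0 hfe.
have [C SC] := (finite_set_leP S).1 fS.
by exists C => n _; exists S; split => //; exact: forever_spanning.
Qed.

End CompactQ.

Section ContinuousFlow.
Hypothesis hU : compact [set: U].
Hypothesis hphi :
  continuous (fun p : nat * X * {ptws nat -> U} => phi F p.1.1 p.1.2 p.2).

Lemma phi_continuous_control (k : nat) (y : X) :
  continuous (fun w : {ptws nat -> U} => phi F k y w).
Proof.
move=> w; apply: (@continuous_comp _ _ _ (fun w : {ptws nat -> U} => (k, y, w))
  (fun p : nat * X * {ptws nat -> U} => phi F p.1.1 p.1.2 p.2)); last exact: hphi.
exact: (@cvg_pair _ _ _ (nbhs w) (nbhs (k, y)) (nbhs w) _ _ _ (fun=> (k, y)) id (cvg_cst _) cvg_id).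
Qed.

(* For a closed target, the tuples spanning up to time n form a closed set of
   the product space: a finite union, over the index, of an intersection of
   preimages of the target by continuous maps. *)
Lemma tuple_spans_closed (A : set X) (C n : nat) :
  closed A -> closed [set W : {ptws nat -> {ptws nat -> U}} | tuple_spans A C n W].
Proof.
move=> Acl.
have -> : [set W : {ptws nat -> {ptws nat -> U}} | tuple_spans A C n W] =
    \bigcap_(y in Q) \bigcup_(i in `I_C) \bigcap_(k in `I_n)
      ((fun W : {ptws nat -> {ptws nat -> U}} => W i) @^-1`
        ((fun w : {ptws nat -> U} => phi F k y w) @^-1` A)).
  by apply/seteqP; split=> W HW y Qy; have [i iC Hi] := HW y Qy; exists i.
apply: closed_bigI => y _; apply: closed_bigcup => // i _.
apply: closed_bigI => k _; apply: preimage_closed.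
  by move=> W _; exact: (@proj_continuous nat (fun _ => {ptws nat -> U}) i).
apply: preimage_closed => // w _; exact: phi_continuous_control.
Qed.

Theorem bounded_complexity_fin_equi_inv :
  Q !=set0 -> bounded_inv_complexity F Q -> fin_equi_inv F Q.
Proof.
move=> Q0 hB x Qx; split=> // eps eps0.
have eps20 : 0 < eps / 2 by rewrite divr_gt0.
have [C hC] := hB _ eps20.
pose target := closure (Beps (eps / 2) Q).
have [W HW] : exists W : {ptws nat -> {ptws nat -> U}},
    forall n, tuple_spans target C n W.
  apply: compact_antitone_closed => [||n m nm|n].
  - exact/compact_sequences/compact_sequences.
  - by move=> n; apply/tuple_spans_closed/closed_closure.
  - by move=> W; exact: tuple_spans_antitone.
  - have [W HW] := rinv_le_tuple_spans Q0 (hC n.+1 isT).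
    exists W; apply: (tuple_spans_antitone (leqnSn n)).
    exact: (tuple_spans_sub (@subset_closure _ _) HW).
exists 1; split => //; exists (W @` `I_C); split; first exact: finite_image.
move=> y _ Qy; have [i iC Hi] := tuple_spans_forever HW y Qy.
by exists (W i); [exists i | move=> k; exact/closure_Beps_half/Hi].
Qed.

End ContinuousFlow.
End ControlSystem.

Theorem mainTheorem1 (R : realType) (X U : metricType R)
  (F : X -> U -> X)
  (hU : compact [set: U])
  (hF : forall u : U, continuous (fun x : X => F x u))
  (hphi : continuous (fun p : nat * X * {ptws nat -> U} => phi F p.1.1 p.1.2 p.2))
  (Q : set X) (hQ0 : Q !=set0) (hQ : compact Q) :
  fin_equi_inv F Q <-> bounded_inv_complexity F Q.
Proof.
split; first exact: fin_equi_inv_bounded_complexity hQ.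
exact: bounded_complexity_fin_equi_inv hU hphi hQ0.
Qed.
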